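(* Let $k_1,k_2\in\mathbb N$ with $k_1<k_2$. For parameters $(N,D,b,r)$ with $N\in\mathbb N$, $D>0$, $b=(b_1,\dots,b_N)$ with $b_i>0$, and $r=(r_1,\dots,r_N)$ with $0<r_1<\cdots<r_N$, let $$P_N^k(\lambda)=\Big(D+\frac{\lambda^2}{(2k-1)^2}\Big)\prod_{j=1}^N(\lambda+r_j)-\sum_{i=1}^N b_i\prod_{1\le j\le N,\,j\ne i}(\lambda+r_j).$$ Then the two multisets of complex roots (counted with multiplicity) of $P_N^{k_1}$ and of $P_N^{k_2}$ uniquely determine $N$, $D$, $r_1,\dots,r_N$ and $b_1,\dots,b_N$: if $(N,D,b,r)$ and $(N',D',b',r')$ are two admissible parameter sets whose polynomials $P^{k_1}$ have the same root multiset and whose polynomials $P^{k_2}$ have the same root multiset, then $N=N'$, $D=D'$, $r=r'$ and $b=b'$. In particular the relaxation function $G(t)=\sum_{i=1}^N s_ie^{-r_it}$ with $s_i=b_i/r_i$ is uniquely determined.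
   Context: The roots of $P_N^k$ are the eigenvalues (the ''cluster'' indexed by $k$) of the reduced eigenvalue problem $\lambda U=A^k_{N+2}U$, obtained from the extended Burgers viscoacoustic system $u'=v$, $v'=D\partial_x^2u+\sum_i b_iw_i$, $w_i'=\partial_x^2u-r_iw_i$ on $(0,\pi/2)$ with $u(0)=0$, $\partial_xu(\pi/2)=0$, by replacing $\partial_x^2$ with its eigenvalue $-(2k-1)^2$. Here $b_i=s_ir_i$ where $G(t)=\sum_i s_ie^{-r_it}$ is the Prony-series relaxation function; $D>0$ is treated as an independent parameter. *)

From HB Require Import structures.
From mathcomp Require Import all_boot all_order all_algebra.
From mathcomp Require Import complex.
From mathcomp Require Import Rstruct.
From Stdlib Require Rdefinitions.
Notation R := Rdefinitions.R.
Set Implicit Arguments. Unset Strict Implicit. Unset Printing Implicit Defensive.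
Import Order.TTheory GRing.Theory Num.Theory.
Local Open Scope ring_scope.
Local Open Scope complex_scope.

Definition cst (x : R) : {poly R[i]} := (x%:C)%:P.

Definition Ppoly (k N : nat) (D : R) (b r : seq R) : {poly R[i]} :=
  (cst D + cst ((((2 * k).-1)%:R : R) ^+ 2)^-1 * 'X^2)
    * \prod_(j < N) ('X + cst (nth 0 r j))
  - \sum_(i < N) cst (nth 0 b i) * \prod_(j < N | j != i) ('X + cst (nth 0 r j)).

Definition admissible (N : nat) (D : R) (b r : seq R) : Prop :=
  [/\ 0 < D, size b = N, size r = N,
      (forall i, (i < N)%N -> 0 < nth 0 b i /\ 0 < nth 0 r i)
    & (forall i j, (i < j < N)%N -> nth 0 r i < nth 0 r j)].

Definition same_roots (p q : {poly R[i]}) : Prop :=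
  forall z : R[i], mup z p = mup z q.

From HB Require Import structures.
From mathcomp Require Import all_boot all_order all_algebra.
From mathcomp Require Import complex.
From mathcomp Require Import Rstruct.
From mathcomp Require Import ring zify.
Set Implicit Arguments. Unset Strict Implicit. Unset Printing Implicit Defensive.
Import Order.TTheory GRing.Theory Num.Theory.
Local Open Scope ring_scope.
Local Open Scope complex_scope.

(* Since the roots determine a polynomial up to its leading coefficient, each
   root multiset determines P_N^k itself, and N = deg P_N^k - 3.  Writing
   P_N^k = (D + c_k X^2) Q - S with Q = prod_j (X + r_j) and deg S < N, the
   difference P_N^{k1} - P_N^{k2} = (c_{k1} - c_{k2}) X^2 Q recovers Q, hence
   the sorted sequence r of its negated roots.  Comparing degrees in
   (D - D') Q = S - S' gives D = D', and evaluating S at -r_i, where all but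
   the i-th summand vanish, gives b_i. *)

Lemma mupZ (F : closedFieldType) (c : F) (p : {poly F}) (x : F) :
  c != 0 -> mup x (c *: p) = mup x p.
Proof.
move=> c0; have [->|p0] := eqVneq p 0; first by rewrite scaler0.
by rewrite -mul_polyC mupM ?polyC_eq0 // mupNroot // /root hornerC.
Qed.

Lemma poly_eq_mup (F : closedFieldType) (p q : {poly F}) :
  p != 0 -> lead_coef p = lead_coef q -> (forall z, mup z p = mup z q) -> p = q.
Proof.
move=> p0 lpq mupE; have lp0 : lead_coef p != 0 by rewrite lead_coef_eq0.
have [s Ps] := closed_field_poly_normal p.
have [t Qt] := closed_field_poly_normal q.
have st : perm_eq s t.
  apply/allP => x _ /=; apply/eqP; have := mupE x.
  by rewrite Ps Qt -lpq !mupZ // !mu_prod_XsubC.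
by rewrite Ps Qt -lpq (perm_big _ st).
Qed.

Section ShiftedLinearFactors.
Variables (F : idomainType) (N : nat) (c : 'I_N -> F).

Definition qpoly : {poly F} := \prod_(j < N) ('X + (c j)%:P).

Definition spoly (a : 'I_N -> F) : {poly F} :=
  \sum_(i < N) (a i)%:P * \prod_(j < N | j != i) ('X + (c j)%:P).

Lemma size_prod_XaddC (P : pred 'I_N) :
  size (\prod_(j < N | P j) ('X + (c j)%:P)) = #|P|.+1.
Proof.
rewrite size_prod; last by move=> j _; rewrite -size_poly_eq0 size_XaddC.
rewrite (eq_bigr (fun _ => 2%N)); last by move=> j _; rewrite size_XaddC.
by rewrite sum_nat_const muln2 -addnn -addSn addnK.
Qed.

Lemma qpoly_monic : qpoly \is monic.
Proof. by apply: monic_prod => j _; apply: monicXaddC. Qed.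

Lemma size_qpoly : size qpoly = N.+1.
Proof. by rewrite size_prod_XaddC cardT size_enum_ord. Qed.

Lemma root_qpoly x : root qpoly x = [exists j, x == - c j].
Proof.
rewrite /root horner_prod; apply/prodf_eq0/existsP => -[j].
  by rewrite hornerD hornerX hornerC addr_eq0 => ?; exists j.
by move=> xj; exists j => //; rewrite hornerD hornerX hornerC addr_eq0.
Qed.

Lemma size_spoly a : (size (spoly a) <= N)%N.
Proof.
apply: (big_ind (fun p : {poly F} => (size p <= N)%N)) => [||i _].
- by rewrite size_poly0.
- by move=> p q sp sq; rewrite (leq_trans (size_polyD _ _)) // geq_max sp sq.
rewrite mul_polyC (leq_trans (size_scale_leq _ _)) // size_prod_XaddC.
have -> : #|(fun j : 'I_N => j != i)| = #|predC1 i| by apply: eq_card.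
by rewrite cardC1 card_ord; case: N i => [[]|].
Qed.

Hypothesis c_inj : injective c.

Lemma horner_spoly a i :
  (spoly a).[- c i] = a i * \prod_(j < N | j != i) (c j - c i).
Proof.
rewrite horner_sum (bigD1 i) //= [X in _ + X]big1 ?addr0 => [|k ki].
  rewrite hornerM hornerC horner_prod; congr (_ * _).
  by apply: eq_bigr => j _; rewrite hornerD hornerX hornerC addrC.
rewrite hornerM horner_prod (bigD1 i) 1?eq_sym //=.
by rewrite hornerD hornerX !hornerC addNr mul0r mulr0.
Qed.

Lemma spoly_inj a a' : spoly a = spoly a' -> a =1 a'.
Proof.
move=> aa' i; have := congr1 (horner^~ (- c i)) aa'; rewrite /= !horner_spoly.
apply: mulIf; apply/prodf_neq0 => j ji; rewrite subr_eq0.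
by rewrite (inj_eq c_inj).
Qed.

End ShiftedLinearFactors.

Definition quad_coef (k : nat) : R := ((((2 * k).-1)%:R : R) ^+ 2)^-1.

Definition embedC N (s : seq R) : 'I_N -> R[i] := fun j => (nth 0 s j)%:C.
Arguments embedC : clear implicits.

Lemma PpolyE k N D b r : Ppoly k N D b r =
  (cst D + cst (quad_coef k) * 'X^2) * qpoly (embedC N r)
  - spoly (embedC N r) (embedC N b).
Proof. by []. Qed.

Lemma cst_inj : injective cst.
Proof. by move=> x y /polyC_inj/complexI. Qed.

Lemma quad_coef_neq0 k : (0 < k)%N -> quad_coef k != 0.
Proof. by move=> k0; rewrite invr_eq0 expf_eq0 /= pnatr_eq0; lia. Qed.

Lemma quad_coef_inj k1 k2 :
  (0 < k1)%N -> (0 < k2)%N -> quad_coef k1 = quad_coef k2 -> k1 = k2.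
Proof.
move=> k10 k20 /invr_inj /eqP; rewrite -!natrX eqr_nat eqn_exp2r // => /eqP; lia.
Qed.

Section FixedWaveNumber.
Variables (k : nat) (k_gt0 : (0 < k)%N).

Let quad_coefC_neq0 : (quad_coef k)%:C != 0.
Proof. by rewrite (inj_eq (@complexI _)) quad_coef_neq0. Qed.

Let size_quad_term : size (cst (quad_coef k) * 'X^2) = 3%N.
Proof. by rewrite mul_polyC size_scale // size_polyXn. Qed.

Let size_cst_lt D : (size (cst D) < size (cst (quad_coef k) * 'X^2)%R)%N.
Proof. by rewrite size_quad_term; apply: leq_ltn_trans (size_polyC_leq1 _) _. Qed.

Lemma size_quad_factor D : size (cst D + cst (quad_coef k) * 'X^2) = 3%N.
Proof. by rewrite addrC size_polyDl. Qed.

Lemma lead_coef_quad_factor D :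
  lead_coef (cst D + cst (quad_coef k) * 'X^2) = (quad_coef k)%:C.
Proof.
by rewrite addrC lead_coefDl // mul_polyC lead_coefZ lead_coefXn mulr1.
Qed.

Let size_quad_mul_qpoly N D r :
  size ((cst D + cst (quad_coef k) * 'X^2) * qpoly (embedC N r)) = N.+3.
Proof.
by rewrite size_Mmonic ?qpoly_monic ?size_quad_factor ?size_qpoly //
   -size_poly_eq0 size_quad_factor.
Qed.

Let size_spoly_lt N D b r :
  (size (- spoly (embedC N r) (embedC N b)) <
   size ((cst D + cst (quad_coef k) * 'X^2) * qpoly (embedC N r))%R)%N.
Proof.
by rewrite size_polyN size_quad_mul_qpoly (leq_ltn_trans (size_spoly _ _)) // ltnS leqW.
Qed.

Lemma size_Ppoly N D b r : size (Ppoly k N D b r) = N.+3.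
Proof. by rewrite PpolyE size_polyDl. Qed.

Lemma lead_coef_Ppoly N D b r : lead_coef (Ppoly k N D b r) = (quad_coef k)%:C.
Proof.
by rewrite PpolyE lead_coefDl // lead_coef_Mmonic ?qpoly_monic ?lead_coef_quad_factor.
Qed.

Lemma Ppoly_eq_of_same_roots N N' D D' b b' r r' :
  same_roots (Ppoly k N D b r) (Ppoly k N' D' b' r') ->
  Ppoly k N D b r = Ppoly k N' D' b' r'.
Proof.
apply: poly_eq_mup; last by rewrite !lead_coef_Ppoly.
by rewrite -size_poly_eq0 size_Ppoly.
Qed.

End FixedWaveNumber.

Lemma Ppoly_subk k1 k2 N D b r :
  Ppoly k1 N D b r - Ppoly k2 N D b r =
  (cst (quad_coef k1) - cst (quad_coef k2)) * 'X^2 * qpoly (embedC N r).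
Proof. by rewrite !PpolyE; ring. Qed.

Lemma sorted_lt_nth N (s : seq R) : size s = N ->
  (forall i j, (i < j < N)%N -> nth 0 s i < nth 0 s j) -> sorted <%O s.
Proof. by move=> <- lt_s; apply/(sortedP 0) => i i_lt; apply: lt_s; rewrite ltnSn. Qed.

Lemma embedC_inj N (s : seq R) :
  (forall i j, (i < j < N)%N -> nth 0 s i < nth 0 s j) -> injective (embedC N s).
Proof.
move=> lt_s i j /complexI/eqP; apply: contraTeq; rewrite -(inj_eq val_inj).
case: ltngtP => // ij _.
  by rewrite lt_eqF // lt_s // ij ltn_ord.
by rewrite gt_eqF // lt_s // ij ltn_ord.
Qed.

Lemma mem_root_qpoly N (s : seq R) x :
  size s = N -> (x \in s) = root (qpoly (embedC N s)) (- x%:C).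
Proof.
move=> sN; rewrite root_qpoly; apply/(nthP 0)/existsP => [[i i_lt <-]|[j]].
  by rewrite sN in i_lt; exists (Ordinal i_lt).
rewrite eqr_opp (inj_eq (@complexI _)) => /eqP ->.
by exists j; rewrite ?sN.
Qed.

Lemma qpoly_embedC_inj N (s s' : seq R) :
  size s = N -> size s' = N -> sorted <%O s -> sorted <%O s' ->
  qpoly (embedC N s) = qpoly (embedC N s') -> s = s'.
Proof.
move=> sN s'N lt_s lt_s' qss'; apply: lt_sorted_eq lt_s lt_s' _ => x.
by rewrite (mem_root_qpoly _ sN) (mem_root_qpoly _ s'N) qss'.
Qed.

Lemma Ppoly_eq_D k N D D' b b' r :
  Ppoly k N D b r = Ppoly k N D' b' r -> D = D'.
Proof.
rewrite !PpolyE; set Q := qpoly _; set S := spoly _ _; set S' := spoly _ _ => PP'.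
apply/eqP; apply: contraT => DD'.
have DQ : (cst D - cst D') * Q = S - S'.
  apply/eqP; rewrite -subr_eq0; apply/eqP.
  by rewrite -[RHS](subrr ((cst D' + cst (quad_coef k) * 'X^2) * Q - S')) -{1}PP'; ring.
have sD : size (cst D - cst D') = 1%N.
  by rewrite -polyCB size_polyC subr_eq0 (inj_eq (@complexI _)) DD'.
have := congr1 (fun p : {poly R[i]} => size p) DQ.
rewrite /= size_Mmonic ?qpoly_monic -?size_poly_eq0 ?sD // size_qpoly => sS.
have := size_polyD S (- S').
by rewrite -sS size_polyN leq_max !ltnNge !size_spoly.
Qed.

Lemma Ppoly_eq_b k N D b b' r : size b = N -> size b' = N ->
  injective (embedC N r) -> Ppoly k N D b r = Ppoly k N D b' r -> b = b'.
Proof.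
move=> bN b'N r_inj; rewrite !PpolyE => /addrI /oppr_inj /(spoly_inj r_inj) bb'.
apply: (@eq_from_nth _ 0) => [|i]; first by rewrite bN b'N.
by rewrite bN => i_lt; apply: complexI; apply: (bb' (Ordinal i_lt)).
Qed.

Theorem theorem7p1 (k1 k2 : nat) (N N' : nat) (D D' : R) (b r b' r' : seq R) :
  (0 < k1)%N -> (k1 < k2)%N ->
  admissible N D b r -> admissible N' D' b' r' ->
  same_roots (Ppoly k1 N D b r) (Ppoly k1 N' D' b' r') ->
  same_roots (Ppoly k2 N D b r) (Ppoly k2 N' D' b' r') ->
  [/\ N = N', D = D', r = r' & b = b'].
Proof.
move=> k1_gt0 k12 adm adm' roots1 roots2.
have k2_gt0 : (0 < k2)%N by apply: leq_trans k12.
have P1 := Ppoly_eq_of_same_roots k1_gt0 roots1.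
have P2 := Ppoly_eq_of_same_roots k2_gt0 roots2.
have NN' : N = N'.
  by have := congr1 (fun p : {poly R[i]} => size p) P1; rewrite /= !size_Ppoly // => -[].
subst N'; case: adm adm' => _ bN rN _ r_lt [_ b'N r'N _ r'_lt].
have qq' : qpoly (embedC N r) = qpoly (embedC N r').
  have := congr2 (fun p q => p - q) P1 P2; rewrite /= !Ppoly_subk => PQ.
  apply: (mulfI _ PQ); rewrite mulf_neq0 ?expf_neq0 ?polyX_eq0 // subr_eq0 (inj_eq cst_inj).
  by apply/eqP => /(quad_coef_inj k1_gt0 k2_gt0) k1k2; rewrite k1k2 ltnn in k12.
have rr' : r = r'.
  exact: qpoly_embedC_inj rN r'N (sorted_lt_nth rN r_lt) (sorted_lt_nth r'N r'_lt) qq'.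
subst r'.
have DD' := Ppoly_eq_D P1; subst D'.
by split=> //; apply: Ppoly_eq_b bN b'N (embedC_inj r_lt) P1.
Qed.
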